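(* Consider the controlled SI optimal control problem described in the context, with one control per node ($M=N$), given (fixed) initial conditions, and quadratic costs $g_j(u)=c_ju^2$ with $c_j>0$ for $1\le j\le N$. Let $(\boldsymbol i^*(t), \boldsymbol\lambda^*(t), \boldsymbol u^*(t))$, $t\in[0,T]$, be an optimal state trajectory, its associated adjoint trajectory, and optimal controls satisfying the Pontryagin Maximum Principle conditions listed in the context. Then each optimal control $u_j^*(t)$, $1\le j\le N$, is a convex function of $t$ on $[0,T]$.
   Context: Let $N\geq 1$, and let $\boldsymbol A=(A_{jk})$ be an $N\times N$ symmetric matrix with entries in $\{0,1\}$ (adjacency matrix of an undirected, unweighted network on nodes $1,\dots,N$). Fix $\beta>0$, a horizon $T>0$, and initial values $x_{0j}\in[0,1]$. Each node $j$ has its own control $u_j(t)$. The state $i_j(t)\in[0,1]$ (probability node $j$ is informed), with $s_j(t)=1-i_j(t)$, evolves by $\dot i_j(t)=\beta s_j(t)\sum_{k=1}^N A_{jk}i_k(t)+u_j(t)s_j(t)$, $i_j(0)=x_{0j}$, $1\le j\le N$. The objective to be maximized is $J=\frac1N\sum_{j=1}^N i_j(T)-\sum_{j=1}^N\int_0^T g_j(u_j(t))\,dt$. The optimal controls are nonnegative: $u_j^*(t)\ge 0$. The Hamiltonian is $H(\boldsymbol i,\boldsymbol\lambda,\boldsymbol u)=-\sum_{j=1}^N g_j(u_j)+\sum_{l=1}^N\lambda_l\big(\beta s_l\sum_{k=1}^N A_{lk}i_k+u_l s_l\big)$ with $s_l=1-i_l$. The Pontryagin conditions are: $\boldsymbol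 i^*$ solves the state equations above; the adjoint variables satisfy $\dot\lambda_j^*(t)=-\beta\sum_{l=1}^N\lambda_l^*(t)s_l^*(t)A_{lj}+\beta\lambda_j^*(t)\sum_{k=1}^N A_{jk}i_k^*(t)+\lambda_j^*(t)u_j^*(t)$ with $\lambda_j^*(T)=1/N$; and for each $t$, $\boldsymbol u^*(t)$ maximizes $H(\boldsymbol i^*(t),\boldsymbol\lambda^*(t),\cdot)$, which gives $g_j'(u_j^*(t))=\lambda_j^*(t)s_j^*(t)$ for each $j$. *)

From Stdlib Require Import Reals.
From Coquelicot Require Import Coquelicot.
Open Scope R_scope.

(* fsum N f = f 0 + f 1 + ... + f (N-1): nodes 1..N of the paper are indexed 0..N-1. *)
Fixpoint fsum (N : nat) (f : nat -> R) : R :=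
  match N with
  | O => 0
  | S n => fsum n f + f n
  end.

Definition cont_on_interval (f : R -> R) (a b : R) : Prop :=
  forall t, a <= t <= b ->
    filterlim f (within (fun x => a <= x <= b) (locally t)) (locally (f t)).

Definition convex_on (f : R -> R) (a b : R) : Prop :=
  forall x y theta, a <= x <= b -> a <= y <= b -> 0 <= theta <= 1 ->
    f (theta * x + (1 - theta) * y) <= theta * f x + (1 - theta) * f y.

From Stdlib Require Import Reals Lra Lia.
From Coquelicot Require Import Coquelicot.
Open Scope R_scope.

(* Write [w_j = lam_j s_j] ([costate_gain]); the maximum condition says [u_j = w_j / (2 c_j)].
   Along the Pontryagin system the terms of [w_j'] carrying [u_j] and
   [sum_k A_jk i_k] cancel, leaving [w_j' = - beta s_j sum_m w_m A_mj].
   Since every [w_m = 2 c_m u_m] is nonnegative, each [w_m] is nonincreasing, and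
   so is [s_j] because [i_j' >= 0].  Hence [w_j'] is minus a product of two
   nonnegative nonincreasing functions, so it is nondecreasing: [w_j], and with
   it [u_j], is convex. *)

Lemma fsum_nonneg (N : nat) (f : nat -> R) :
  (forall k, (k < N)%nat -> 0 <= f k) -> 0 <= fsum N f.
Proof.
  induction N as [|N IH]; intros Hf; simpl; [lra|].
  assert (0 <= fsum N f) by (apply IH; intros; apply Hf; lia).
  assert (0 <= f N) by (apply Hf; lia).
  lra.
Qed.

Lemma fsum_le (N : nat) (f g : nat -> R) :
  (forall k, (k < N)%nat -> f k <= g k) -> fsum N f <= fsum N g.
Proof.
  induction N as [|N IH]; intros Hfg; simpl; [lra|].
  assert (fsum N f <= fsum N g) by (apply IH; intros; apply Hfg; lia).
  assert (f N <= g N) by (apply Hfg; lia).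
  lra.
Qed.

Lemma cont_on_interval_mult (f g : R -> R) (a b : R) :
  cont_on_interval f a b -> cont_on_interval g a b ->
  cont_on_interval (fun t => f t * g t) a b.
Proof.
  intros Hf Hg t Ht.
  exact (filterlim_comp_2 f g Rmult (Hf t Ht) (Hg t Ht) (filterlim_mult (K := R_AbsRing) _ _)).
Qed.

Lemma cont_on_interval_const_minus (k : R) (g : R -> R) (a b : R) :
  cont_on_interval g a b -> cont_on_interval (fun t => k - g t) a b.
Proof.
  intros Hg t Ht.
  eapply (filterlim_comp_2 (fun _ => k) (fun t => - g t) Rplus (filterlim_const k)).
  - exact (filterlim_comp _ _ _ g Ropp _ _ _ (Hg t Ht) (filterlim_opp (V := R_NormedModule) _)).
  - exact (filterlim_plus (V := R_NormedModule) k (- g t)).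
Qed.

Definition clamp (a b x : R) : R := Rmax a (Rmin b x).

Lemma clamp_in (a b x : R) : a <= b -> a <= clamp a b x <= b.
Proof. intros. unfold clamp, Rmax, Rmin. repeat destruct Rle_dec; lra. Qed.

Lemma clamp_id (a b x : R) : a <= x <= b -> clamp a b x = x.
Proof. intros. unfold clamp, Rmax, Rmin. repeat destruct Rle_dec; lra. Qed.

Lemma clamp_lipschitz (a b x y : R) : a <= b -> Rabs (clamp a b x - clamp a b y) <= Rabs (x - y).
Proof.
  intros. unfold clamp, Rmax, Rmin.
  repeat destruct Rle_dec; unfold Rabs; repeat destruct Rcase_abs; lra.
Qed.

Lemma continuity_pt_comp_clamp (f : R -> R) (a b t : R) :
  a <= b -> cont_on_interval f a b -> continuity_pt (fun x => f (clamp a b x)) t.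
Proof.
  intros Hab Hf. apply continuity_pt_filterlim.
  eapply filterlim_comp; [|exact (Hf (clamp a b t) (clamp_in a b t Hab))].
  intros Q [eps Heps]. exists eps. intros y Hy.
  apply Heps; [|exact (clamp_in a b y Hab)].
  pose proof (clamp_lipschitz a b y t Hab).
  revert Hy. unfold ball; simpl; unfold AbsRing_ball, abs, minus, plus, opp; simpl.
  unfold Rminus in *. lra.
Qed.

Lemma MVT_is_derive (f df : R -> R) (a b : R) : a < b ->
  (forall t, a < t < b -> is_derive f t (df t)) ->
  (forall t, a <= t <= b -> continuity_pt f t) ->
  exists c, a < c < b /\ f b - f a = df c * (b - a).
Proof.
  intros Hab Hd Hc.
  destruct (MVT f id a b (fun t Ht => ex_derive_Reals_0 f t (ex_intro _ _ (Hd t Ht)))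
     (fun t _ => derivable_pt_id t) Hab Hc
     (fun t _ => derivable_continuous_pt _ _ (derivable_pt_id t))) as [c [Hc' E]].
  exists c. split; [exact Hc'|].
  rewrite derive_pt_id, (derive_pt_eq_0 _ _ (df c)) in E.
  - unfold id in E. lra.
  - apply is_derive_Reals, Hd, Hc'.
Qed.

Lemma continuity_pt_of_is_derive (f : R -> R) (t l : R) : is_derive f t l -> continuity_pt f t.
Proof.
  intro H. apply continuity_pt_filterlim.
  apply (ex_derive_continuous (K := R_AbsRing) (V := R_NormedModule)). exists l. exact H.
Qed.

Lemma nonincreasing_of_deriv_nonpos (f df : R -> R) (a b : R) :
  (forall t, a < t < b -> is_derive f t (df t)) ->
  (forall t, a < t < b -> df t <= 0) ->
  forall s t, a < s -> s <= t -> t < b -> f t <= f s.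
Proof.
  intros Hd Hneg s t Hs Hst Ht.
  destruct (Req_dec s t) as [->|Hne]; [lra|].
  destruct (MVT_is_derive f df s t) as [c [Hc E]].
  - lra.
  - intros x Hx. apply Hd. lra.
  - intros x Hx. apply (continuity_pt_of_is_derive f x (df x)), Hd. lra.
  - assert (df c <= 0) by (apply Hneg; lra). nra.
Qed.

Lemma three_chord_of_deriv_nondecreasing (g D : R -> R) (a b x z y : R) :
  (forall t, a <= t <= b -> continuity_pt g t) ->
  (forall t, a < t < b -> is_derive g t (D t)) ->
  (forall s t, a < s -> s <= t -> t < b -> D s <= D t) ->
  a <= x -> x < z -> z < y -> y <= b ->
  (g z - g x) * (y - z) <= (g y - g z) * (z - x).
Proof.
  intros Hc Hd HD Hx Hxz Hzy Hy.
  destruct (MVT_is_derive g D x z) as [c1 [Hc1 E1]];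
    [lra | intros t Ht; apply Hd; lra | intros t Ht; apply Hc; lra |].
  destruct (MVT_is_derive g D z y) as [c2 [Hc2 E2]];
    [lra | intros t Ht; apply Hd; lra | intros t Ht; apply Hc; lra |].
  assert (D c1 <= D c2) by (apply HD; lra).
  rewrite E1, E2.
  assert (0 <= (z - x) * (y - z)) by nra.
  nra.
Qed.

Lemma convex_on_of_three_chord (f : R -> R) (a b : R) :
  (forall x z y, a <= x -> x < z -> z < y -> y <= b ->
     (f z - f x) * (y - z) <= (f y - f z) * (z - x)) ->
  convex_on f a b.
Proof.
  intros Hchord.
  assert (Hlt : forall x y th, a <= x -> x < y -> y <= b -> 0 < th < 1 ->
            f (th * x + (1 - th) * y) <= th * f x + (1 - th) * f y).
  { intros x y th Hx Hxy Hy Hth.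
    set (z := th * x + (1 - th) * y).
    assert (Hz : x < z < y) by (unfold z; nra).
    pose proof (Hchord x z y Hx (proj1 Hz) (proj2 Hz) Hy) as H.
    replace (y - z) with (th * (y - x)) in H by (unfold z; ring).
    replace (z - x) with ((1 - th) * (y - x)) in H by (unfold z; ring).
    assert (0 <= (th * f x + (1 - th) * f y - f z) * (y - x)) by nra.
    nra. }
  intros x y th Hx Hy Hth.
  destruct (Req_dec th 0) as [->|H0].
  { replace (0 * x + (1 - 0) * y) with y by ring. lra. }
  destruct (Req_dec th 1) as [->|H1].
  { replace (1 * x + (1 - 1) * y) with x by ring. lra. }
  destruct (Rtotal_order x y) as [Hxy|[->|Hxy]].
  - apply Hlt; lra.
  - replace (th * y + (1 - th) * y) with y by ring. lra.
  - replace (th * x + (1 - th) * y) with ((1 - th) * y + (1 - (1 - th)) * x) by ring.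
    replace (th * f x + (1 - th) * f y) with ((1 - th) * f y + (1 - (1 - th)) * f x) by ring.
    apply Hlt; lra.
Qed.

Lemma convex_on_of_deriv_nondecreasing (f D : R -> R) (a b : R) :
  cont_on_interval f a b ->
  (forall t, a < t < b -> is_derive f t (D t)) ->
  (forall s t, a < s -> s <= t -> t < b -> D s <= D t) ->
  convex_on f a b.
Proof.
  intros Hf Hd HD. apply convex_on_of_three_chord.
  (* [f] extended constantly outside [a,b] is continuous everywhere, as the
     mean value theorem requires at the endpoints. *)
  intros x z y Hx Hxz Hzy Hy.
  set (g := fun t => f (clamp a b t)).
  assert (Hg : forall t, a <= t <= b -> f t = g t) by (intros; unfold g; rewrite clamp_id; auto).
  rewrite (Hg x), (Hg z), (Hg y) by lra.
  apply (three_chord_of_deriv_nondecreasing g D a b); auto.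
  - intros t _. apply continuity_pt_comp_clamp; [lra | exact Hf].
  - intros t Ht. apply (is_derive_ext_loc f); [|exact (Hd t Ht)].
    assert (Hr : 0 < Rmin (t - a) (b - t)) by (apply Rmin_glb_lt; lra).
    exists (mkposreal _ Hr). intros s Hs. apply Hg.
    revert Hs. unfold ball; simpl; unfold AbsRing_ball, abs, minus, plus, opp; simpl.
    pose proof (Rmin_l (t - a) (b - t)). pose proof (Rmin_r (t - a) (b - t)).
    intros Hs. apply Rabs_lt_between in Hs. lra.
Qed.

Lemma convex_on_scale (f g : R -> R) (k a b : R) : 0 <= k ->
  (forall t, a <= t <= b -> f t = k * g t) -> convex_on g a b -> convex_on f a b.
Proof.
  intros Hk Hfg Hg x y th Hx Hy Hth.
  assert (a <= th * x + (1 - th) * y <= b) by nra.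
  rewrite !Hfg by assumption.
  pose proof (Hg x y th Hx Hy Hth). nra.
Qed.

Definition costate_gain (lam i : nat -> R -> R) (l : nat) (t : R) : R :=
  lam l t * (1 - i l t).

Section Costate_gain.

Variables (N : nat) (A : nat -> nat -> R) (beta T : R) (c : nat -> R).
Variables (i lam u : nat -> R -> R).

Hypothesis HA : forall j k, (j < N)%nat -> (k < N)%nat -> 0 <= A j k.
Hypothesis Hbeta : 0 <= beta.
Hypothesis Hc : forall j, (j < N)%nat -> 0 < c j.
Hypothesis Hi01 : forall j t, (j < N)%nat -> 0 <= t <= T -> 0 <= i j t <= 1.
Hypothesis Hu0 : forall j t, (j < N)%nat -> 0 <= t <= T -> 0 <= u j t.
Hypothesis Hstate : forall j t, (j < N)%nat -> 0 < t < T ->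
  is_derive (i j) t
    (beta * (1 - i j t) * fsum N (fun k => A j k * i k t) + u j t * (1 - i j t)).
Hypothesis Hadj : forall j t, (j < N)%nat -> 0 < t < T ->
  is_derive (lam j) t
    (- beta * fsum N (fun l => lam l t * (1 - i l t) * A l j)
     + beta * lam j t * fsum N (fun k => A j k * i k t)
     + lam j t * u j t).
Hypothesis Hmax : forall j t, (j < N)%nat -> 0 <= t <= T ->
  2 * c j * u j t = lam j t * (1 - i j t).

Lemma costate_gain_nonneg (l : nat) (t : R) :
  (l < N)%nat -> 0 <= t <= T -> 0 <= costate_gain lam i l t.
Proof.
  intros Hl Ht. unfold costate_gain. rewrite <- Hmax by assumption.
  pose proof (Hc l Hl). pose proof (Hu0 l t Hl Ht). nra.
Qed.

Lemma is_derive_costate_gain (l : nat) (t : R) : (l < N)%nat -> 0 < t < T ->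
  is_derive (costate_gain lam i l) t
    (- beta * (1 - i l t) * fsum N (fun m => costate_gain lam i m t * A m l)).
Proof.
  intros Hl Ht.
  pose proof (is_derive_mult (lam l) (fun t => 1 - i l t) t _ _ (Hadj l t Hl Ht)
    (is_derive_minus _ (i l) t _ _ (is_derive_const 1 t) (Hstate l t Hl Ht)) Rmult_comm) as H.
  match type of H with is_derive _ _ ?v =>
    replace (- beta * _ * _) with v; [exact H|] end.
  unfold costate_gain, minus, opp, zero, mult, plus; simpl; unfold plus; simpl. ring.
Qed.

Lemma costate_gain_nonincreasing (l : nat) (s t : R) :
  (l < N)%nat -> 0 < s -> s <= t -> t < T ->
  costate_gain lam i l t <= costate_gain lam i l s.
Proof.
  intros Hl. apply (nonincreasing_of_deriv_nonpos _
    (fun t => - beta * (1 - i l t) * fsum N (fun m => costate_gain lam i m t * A m l)) 0 T).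
  - intros t' Ht'. apply is_derive_costate_gain; assumption.
  - intros t' Ht'.
    assert (0 <= fsum N (fun m => costate_gain lam i m t' * A m l)).
    { apply fsum_nonneg. intros m Hm.
      apply Rmult_le_pos; [apply costate_gain_nonneg | apply HA]; auto; lra. }
    pose proof (Hi01 l t' Hl ltac:(lra)).
    assert (0 <= beta * (1 - i l t')) by nra. nra.
Qed.

Lemma susceptible_nonincreasing (j : nat) (s t : R) :
  (j < N)%nat -> 0 < s -> s <= t -> t < T -> 1 - i j t <= 1 - i j s.
Proof.
  intros Hj. apply (nonincreasing_of_deriv_nonpos (fun t => 1 - i j t)
    (fun t => 0 - (beta * (1 - i j t) * fsum N (fun k => A j k * i k t) + u j t * (1 - i j t))) 0 T).
  - intros t' Ht'. exact (is_derive_minus _ (i j) t' _ _ (is_derive_const 1 t') (Hstate j t' Hj Ht')).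
  - intros t' Ht'.
    assert (0 <= fsum N (fun k => A j k * i k t')).
    { apply fsum_nonneg. intros k Hk. apply Rmult_le_pos; [apply HA | apply (Hi01 k t')]; auto; lra. }
    pose proof (Hi01 j t' Hj ltac:(lra)). pose proof (Hu0 j t' Hj ltac:(lra)).
    assert (0 <= beta * (1 - i j t')) by nra. nra.
Qed.

Lemma costate_gain_convex (j : nat) : (j < N)%nat ->
  cont_on_interval (lam j) 0 T -> cont_on_interval (i j) 0 T ->
  convex_on (costate_gain lam i j) 0 T.
Proof.
  intros Hj Hlam Hi.
  set (S := fun t => fsum N (fun m => costate_gain lam i m t * A m j)).
  apply (convex_on_of_deriv_nondecreasing _ (fun t => - beta * (1 - i j t) * S t)).
  - apply cont_on_interval_mult; [|apply cont_on_interval_const_minus]; assumption.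
  - intros t Ht. apply is_derive_costate_gain; assumption.
  - intros s t Hs Hst Ht.
    assert (HS : S t <= S s).
    { apply fsum_le. intros m Hm. apply Rmult_le_compat_r; [apply HA; assumption|].
      apply costate_gain_nonincreasing; assumption. }
    assert (HS0 : 0 <= S t).
    { apply fsum_nonneg. intros m Hm.
      apply Rmult_le_pos; [apply costate_gain_nonneg | apply HA]; auto; lra. }
    pose proof (Hi01 j t Hj ltac:(lra)).
    assert ((1 - i j t) * S t <= (1 - i j s) * S s).
    { apply Rmult_le_compat; try lra. apply susceptible_nonincreasing; assumption. }
    nra.
Qed.

End Costate_gain.

Theorem theorem2
  (N : nat) (HN : (1 <= N)%nat)
  (A : nat -> nat -> R)
  (HA01 : forall j k, (j < N)%nat -> (k < N)%nat -> A j k = 0 \/ A j k = 1)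
  (HAsym : forall j k, (j < N)%nat -> (k < N)%nat -> A j k = A k j)
  (beta T : R) (Hbeta : 0 < beta) (HT : 0 < T)
  (x0 : nat -> R) (Hx0 : forall j, (j < N)%nat -> 0 <= x0 j <= 1)
  (c : nat -> R) (Hc : forall j, (j < N)%nat -> 0 < c j)
  (i lam u : nat -> R -> R)
  (* states take values in [0,1] *)
  (Hi01 : forall j t, (j < N)%nat -> 0 <= t <= T -> 0 <= i j t <= 1)
  (* optimal controls are nonnegative *)
  (Hu0 : forall j t, (j < N)%nat -> 0 <= t <= T -> 0 <= u j t)
  (* state equations *)
  (Hicont : forall j, (j < N)%nat -> cont_on_interval (i j) 0 T)
  (Hinit : forall j, (j < N)%nat -> i j 0 = x0 j)
  (Hstate : forall j t, (j < N)%nat -> 0 < t < T ->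
     is_derive (i j) t
       (beta * (1 - i j t) * fsum N (fun k => A j k * i k t)
        + u j t * (1 - i j t)))
  (* adjoint equations *)
  (Hlcont : forall j, (j < N)%nat -> cont_on_interval (lam j) 0 T)
  (Hterm : forall j, (j < N)%nat -> lam j T = 1 / INR N)
  (Hadj : forall j t, (j < N)%nat -> 0 < t < T ->
     is_derive (lam j) t
       (- beta * fsum N (fun l => lam l t * (1 - i l t) * A l j)
        + beta * lam j t * fsum N (fun k => A j k * i k t)
        + lam j t * u j t))
  (* maximum condition: derivative of g_j at u_j equals lambda_j s_j, g_j(u) = c_j u^2 *)
  (Hmax : forall j t, (j < N)%nat -> 0 <= t <= T ->
     2 * c j * u j t = lam j t * (1 - i j t)) :
  forall j, (j < N)%nat -> convex_on (u j) 0 T.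
Proof.
  intros j Hj.
  assert (HA : forall l m, (l < N)%nat -> (m < N)%nat -> 0 <= A l m).
  { intros l m Hl Hm. destruct (HA01 l m Hl Hm) as [-> | ->]; lra. }
  pose proof (Hc j Hj) as Hcj.
  apply (convex_on_scale (u j) (costate_gain lam i j) (/ (2 * c j))).
  - apply Rlt_le, Rinv_0_lt_compat. lra.
  - intros t Ht. unfold costate_gain. rewrite <- Hmax by assumption. field. lra.
  - apply (costate_gain_convex N A beta T c i lam u HA (Rlt_le _ _ Hbeta) Hc Hi01 Hu0
      Hstate Hadj Hmax j Hj (Hlcont j Hj) (Hicont j Hj)).
Qed.
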